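(* Let $a_n$, $s$ and $c$ be any integers and let $n$ be a positive integer. Then \[ \sum_{a_{n-1}=c}^{a_n}\sum_{a_{n-2}=c}^{a_{n-1}}\cdots\sum_{a_0=c}^{a_1}F_{3a_0+s}=\frac{F_{2n+3a_n+s}}{2^n}-\sum_{j=0}^{n-1}\frac{F_{2(n-j)+3(c-1)+s}}{2^{n-j}}\binom{a_n+j-c}{j}, \] and \[ \sum_{a_{n-1}=c}^{a_n}\sum_{a_{n-2}=c}^{a_{n-1}}\cdots\sum_{a_0=c}^{a_1}L_{3a_0+s}=\frac{L_{2n+3a_n+s}}{2^n}-\sum_{j=0}^{n-1}\frac{L_{2(n-j)+3(c-1)+s}}{2^{n-j}}\binom{a_n+j-c}{j}. \]
   Context: $F_j$ and $L_j$ are the Fibonacci and Lucas numbers: $F_0=0,F_1=1$, $L_0=2,L_1=1$, both satisfying $X_j=X_{j-1}+X_{j-2}$, extended to all integer indices via the recurrence. For integers $c,m$ and a function $f$ on the integers, $\sum_{k=c}^m f(k)$ denotes the usual sum if $m\ge c$, equals $0$ if $m=c-1$, and equals $-\sum_{k=m+1}^{c-1}f(k)$ if $m\le c-2$. The nested sum $\sum_{a_{n-1}=c}^{a_n}\cdots\sum_{a_0=c}^{a_1}g(a_0)$ is the iterated sum with $n$ summation signs: innermost over $a_0$ from $c$ to $a_1$, then $a_1$ from $c$ to $a_2$, ..., outermost $a_{n-1}$ from $c$ to $a_n$. For an integer $j\ge0$ and any number $y$, $\binom{y}{j}=y(y-1)\cdots(y-j+1)/j!$. *)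

From mathcomp Require Import all_boot all_order all_algebra.
Set Implicit Arguments. Unset Strict Implicit. Unset Printing Implicit Defensive.
Import Order.TTheory GRing.Theory Num.Theory.
Local Open Scope ring_scope.

(* Sequence X on all integers with X_0 = x0, X_1 = x1 and X_j = X_{j-1} + X_{j-2},
   extended to negative indices via the recurrence X_{j-2} = X_j - X_{j-1}. *)
Definition recseq (x0 x1 : int) (k : int) : int :=
  match k with
  | Posz n => (iter n (fun p : int * int => (p.2, p.1 + p.2)) (x0, x1)).1
  | Negz m => (iter m.+1 (fun p : int * int => (p.2 - p.1, p.1)) (x0, x1)).1
  end.

Definition fibZ (k : int) : int := recseq 0 1 k.
Definition lucZ (k : int) : int := recseq 2 1 k.

Definition gsum (c m : int) (f : int -> rat) : rat :=
  if c <= m then \sum_(i < `|(m - c + 1)%R|%N) f (c + i%:Z)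
  else - \sum_(i < `|(c - 1 - m)%R|%N) f (m + 1 + i%:Z).

Fixpoint nested (n : nat) (c : int) (g : int -> rat) (a : int) : rat :=
  match n with
  | O => g a
  | S n' => gsum c a (fun b => nested n' c g b)
  end.

Definition binomQ (y : rat) (j : nat) : rat :=
  (\prod_(i < j) (y - i%:R)) / (j`!)%:R.

From mathcomp Require Import all_boot all_order all_algebra zify ring.
Import Order.TTheory GRing.Theory Num.Theory.
Local Open Scope ring_scope.

(* For a fixed n, both sides are functions of the upper limit b = a_n. The
   (n+1)-fold sum S_{n+1} is characterised by S_{n+1}(c-1) = 0 and
   S_{n+1}(b) - S_{n+1}(b-1) = S_n(b); with the paper's convention for sums
   with m < c this telescoping is valid for every integer b. The right-hand
   side R_n obeys the same recursion for any sequence X with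
   X_{k+2} = X_{k+1} + X_k: in the leading term because
   X_{k+2} - X_{k-1} = 2 X_k absorbs the extra factor 1/2, in the binomial
   terms by Pascal's rule, and R_{n+1}(c-1) = 0 because binom(j, j+1) = 0. *)

Section RecseqRecurrence.
Variables x0 x1 : int.

Let step_back (p : int * int) : int * int := (p.2 - p.1, p.1).

Lemma recseq_oppz m : recseq x0 x1 (- m%:Z) = (iter m step_back (x0, x1)).1.
Proof. by case: m => [|m] //; rewrite -NegzE. Qed.

Lemma recseq_oppzD1 m : recseq x0 x1 (- m%:Z + 1) = (iter m step_back (x0, x1)).2.
Proof.
case: m => [|m] //.
have -> : - m.+1%:Z + 1 = - m%:Z by lia.
by rewrite recseq_oppz.
Qed.

Lemma recseqD2 k : recseq x0 x1 (k + 2) = recseq x0 x1 (k + 1) + recseq x0 x1 k.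
Proof.
case: k => [n|m].
  have -> : Posz n + 2 = Posz n.+2 by lia.
  have -> : Posz n + 1 = Posz n.+1 by lia.
  by rewrite /recseq /= addrC.
have -> : Negz m + 2 = - m%:Z + 1 by rewrite NegzE; lia.
have -> : Negz m + 1 = - m%:Z by rewrite NegzE; lia.
rewrite recseq_oppz recseq_oppzD1 /recseq /=; ring.
Qed.

End RecseqRecurrence.

Lemma sum_ord_telescope (F : int -> rat) (a : int) (N : nat) :
  \sum_(i < N) (F (a + i%:Z + 1) - F (a + i%:Z)) = F (a + N%:Z) - F a.
Proof.
rewrite -(big_mkord xpredT (fun i => F (a + i%:Z + 1) - F (a + i%:Z))).
rewrite (telescope_sumr_eq (fun i : nat => F (a + i%:Z))) ?addr0 //.
by move=> k _; rewrite -addn1 PoszD addrA.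
Qed.

Lemma gsum_telescope (F f : int -> rat) c m :
  (forall b, F b - F (b - 1) = f b) -> gsum c m f = F m - F (c - 1).
Proof.
move=> dF; rewrite /gsum; case: ifP => le_cm.
  set N := absz (m - c + 1)%R.
  have -> : F m = F (c - 1 + N%:Z) by congr F; rewrite /N; lia.
  rewrite -sum_ord_telescope; apply: eq_bigr => i _.
  by rewrite -dF; congr (F _ - F _); ring.
set N := absz (c - 1 - m)%R.
have -> : F (c - 1) = F (m + N%:Z) by congr F; rewrite /N; lia.
rewrite -opprB -sum_ord_telescope; congr (- _); apply: eq_bigr => i _.
by rewrite -dF; congr (F _ - F _); ring.
Qed.

Lemma binomQ0 y : binomQ y 0 = 1.
Proof. by rewrite /binomQ big_ord0 fact0 divr1. Qed.

Lemma binomQ_nat_succ (i : nat) : binomQ i%:R i.+1 = 0.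
Proof. by rewrite /binomQ big_ord_recr /= subrr mulr0 mul0r. Qed.

Lemma binomQ_pascal y j : binomQ y j.+1 - binomQ (y - 1) j.+1 = binomQ (y - 1) j.
Proof.
rewrite /binomQ big_ord_recl big_ord_recr /=.
set P := \prod_(i < j) (y - 1 - i%:R).
have -> : \prod_(i < j) (y - (bump 0 i)%:R) = P.
  by apply: eq_bigr => i _; rewrite /bump /= add1n -addn1 natrD; ring.
have jS_neq0 : j.+1%:R != 0 :> rat by rewrite pnatr_eq0.
have fact_neq0 : j`!%:R != 0 :> rat by rewrite pnatr_eq0 -lt0n fact_gt0.
rewrite factS natrM -natr1; field.
by rewrite natr1 jS_neq0 fact_neq0.
Qed.

Definition nested_closed_form (X : int -> rat) (s c : int) (n : nat) (b : int) : rat :=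
  X (2 * n%:Z + 3 * b + s) / 2 ^+ n
  - \sum_(j < n) X (2 * (n - j)%N%:Z + 3 * (c - 1) + s) / 2 ^+ (n - j)
                   * binomQ (b + j%:Z - c)%:~R j.

Section FibonacciLike.
Variable X : int -> rat.
Hypothesis XD2 : forall k, X (k + 2) = X (k + 1) + X k.

Lemma fiblikeD2B1 k : X (k + 2) - X (k - 1) = 2 * X k.
Proof.
have := XD2 (k - 1).
have -> : k - 1 + 2 = k + 1 by ring.
have -> : k - 1 + 1 = k by ring.
by rewrite XD2 => ->; ring.
Qed.

Variables s c : int.
Notation R := (nested_closed_form X s c).

Lemma nested_closed_form_at_cB1 n : R n.+1 (c - 1) = 0.
Proof.
rewrite /nested_closed_form big_ord_recl /= binomQ0 subn0 mulr1.
rewrite big1 ?addr0 ?subrr // => i _.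
have -> : c - 1 + (bump 0 i)%:Z - c = i%:Z by rewrite /bump /=; lia.
by rewrite binomQ_nat_succ mulr0.
Qed.

Lemma nested_closed_form_binomial_diff n b :
  \sum_(j < n.+1) X (2 * (n.+1 - j)%N%:Z + 3 * (c - 1) + s) / 2 ^+ (n.+1 - j)
                    * binomQ (b + j%:Z - c)%:~R j
  - \sum_(j < n.+1) X (2 * (n.+1 - j)%N%:Z + 3 * (c - 1) + s) / 2 ^+ (n.+1 - j)
                    * binomQ (b - 1 + j%:Z - c)%:~R j
  = \sum_(j < n) X (2 * (n - j)%N%:Z + 3 * (c - 1) + s) / 2 ^+ (n - j)
                    * binomQ (b + j%:Z - c)%:~R j.
Proof.
rewrite -sumrB big_ord_recl /= !binomQ0 subrr add0r.
apply: eq_bigr => i _; rewrite -mulrBr /bump /= add1n subSS.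
have -> : b - 1 + i.+1%:Z - c = (b + i.+1%:Z - c) - 1 by ring.
rewrite (@intrB rat (b + i.+1%:Z - c) 1) binomQ_pascal -(@intrB rat _ 1).
by have -> : b + i.+1%:Z - c - 1 = b + i%:Z - c by lia.
Qed.

Lemma nested_closed_form_diff n b : R n.+1 b - R n.+1 (b - 1) = R n b.
Proof.
rewrite /nested_closed_form.
set k := 2 * n%:Z + 3 * b + s.
have -> : 2 * n.+1%:Z + 3 * b + s = k + 2 by rewrite /k; lia.
have -> : 2 * n.+1%:Z + 3 * (b - 1) + s = k - 1 by rewrite /k; lia.
rewrite -(nested_closed_form_binomial_diff n b).
have -> : X (k + 2) / 2 ^+ n.+1 = X (k - 1) / 2 ^+ n.+1 + X k / 2 ^+ n.
  rewrite -[X (k + 2)](subrK (X (k - 1))) fiblikeD2B1 exprS.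
  have pow2_neq0 : (2 : rat) ^+ n != 0 by rewrite expf_neq0.
  by field; rewrite pow2_neq0.
ring.
Qed.

Lemma nested_fiblike n b : nested n c (fun a0 => X (3 * a0 + s)) b = R n b.
Proof.
elim: n b => [|n IHn] b.
  by rewrite /nested_closed_form /= big_ord0 mulr0 add0r expr0 divr1 subr0.
rewrite /= (@gsum_telescope (R n.+1)) ?nested_closed_form_at_cB1 ?subr0 // => b'.
by rewrite nested_closed_form_diff IHn.
Qed.

End FibonacciLike.

Lemma intr_recseqD2 x0 x1 k :
  (recseq x0 x1 (k + 2))%:~R = (recseq x0 x1 (k + 1))%:~R + (recseq x0 x1 k)%:~R :> rat.
Proof. by rewrite recseqD2 intrD. Qed.

Theorem theorem1 (an s c : int) (n : nat) (hn : (0 < n)%N) :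
  nested n c (fun a0 => (fibZ (3 * a0 + s))%:~R) an =
    (fibZ (2 * n%:Z + 3 * an + s))%:~R / 2 ^+ n
    - \sum_(j < n) (fibZ (2 * (n - j)%N%:Z + 3 * (c - 1) + s))%:~R / 2 ^+ (n - j)
                   * binomQ (an + j%:Z - c)%:~R j
  /\
  nested n c (fun a0 => (lucZ (3 * a0 + s))%:~R) an =
    (lucZ (2 * n%:Z + 3 * an + s))%:~R / 2 ^+ n
    - \sum_(j < n) (lucZ (2 * (n - j)%N%:Z + 3 * (c - 1) + s))%:~R / 2 ^+ (n - j)
                   * binomQ (an + j%:Z - c)%:~R j.
Proof.
by split; apply: (nested_fiblike (fun k => (recseq _ _ k)%:~R)) => k;
  apply: intr_recseqD2.
Qed.
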